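(* Let $U$ be a commutative supertropical monoid with distinguished idempotent $e$. Then $U$ is a semiring (with respect to the addition defined below) if and only if the following condition holds: (Dis) for all $x,y,z\in U$: if $0<ex<ey$ and $exz=eyz$, then $yz=eyz$ (i.e. $yz\in eU$). In this case the semiring $U$ is a supertropical semiring.
   Context: A bipotent semiring is a commutative monoid $(M,\cdot)$ with absorbing element $0$, equipped with a total order compatible with multiplication ($x\le y\Rightarrow xz\le yz$) in which $0$ is the least element; its addition is $x+y=\max(x,y)$. A supertropical monoid is a monoid $(U,\cdot)$ with an absorbing element $0$ and a distinguished central idempotent $e$ such that $ex=0$ implies $x=0$, together with a total ordering on the submonoid $M:=eU$ compatible with multiplication, making $M$ a bipotent semiring (the ghost ideal). On a supertropical monoid $U$ define the addition $x+y:=y$ if $ex<ey$, $x+y:=x$ if $ex>ey$, and $x+y:=ex$ if $ex=ey$. One says $U$ ''is a semiring'' if this addition is associative and multiplication distributes over it. A supertropical semiring is a semiring $U$ in which $e:=1+1$ is idempotent, $eU$ is bipotent (sums of elements of $eU$ lie in $\{x,y\}$), and for all $x,y$: $x+y=ex$ if $ex=ey$, and $x+y\in\{x,y\}$ otherwise. *)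

From Stdlib Require Import Bool.

Section Supertropical.
Variables (U : Type) (mul : U -> U -> U) (one zero e : U) (le : U -> U -> bool).

Local Notation "x * y" := (mul x y).

Definition lt (a b : U) : bool := le a b && negb (le b a).

(* A commutative supertropical monoid (U, *, 1, 0) with distinguished
   idempotent e and a total order [le] on the ghost ideal M = eU
   (elements of M are exactly those of the form e*x, since e is idempotent;
   [le] is only constrained on M). *)
Record comm_supertropical_monoid : Prop := {
  mulA : forall x y z, x * (y * z) = (x * y) * z;
  mulC : forall x y, x * y = y * x;
  mul1x : forall x, one * x = x;
  mul0x : forall x, zero * x = zero;
  e_idem : e * e = e;
  e_faithful : forall x, e * x = zero -> x = zero;
  le_refl : forall x, le (e * x) (e * x) = true;
  le_antisym : forall x y, le (e * x) (e * y) = true -> le (e * y) (e * x) = true ->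
                 e * x = e * y;
  le_trans : forall x y z, le (e * x) (e * y) = true -> le (e * y) (e * z) = true ->
                 le (e * x) (e * z) = true;
  le_total : forall x y, le (e * x) (e * y) || le (e * y) (e * x) = true;
  le_mul : forall x y z, le (e * x) (e * y) = true ->
             le ((e * x) * (e * z)) ((e * y) * (e * z)) = true;
  le0 : forall x, le zero (e * x) = true
}.

Definition st_add (x y : U) : U :=
  if le (e * x) (e * y) then
    (if le (e * y) (e * x) then e * x else y)
  else x.

Definition st_is_semiring : Prop :=
  (forall x y z, st_add x (st_add y z) = st_add (st_add x y) z) /\
  (forall x y z, z * st_add x y = st_add (z * x) (z * y)) /\
  (forall x y z, st_add x y * z = st_add (x * z) (y * z)).

Definition Dis : Prop :=
  forall x y z, lt zero (e * x) = true -> lt (e * x) (e * y) = true ->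
    (e * x) * z = (e * y) * z -> y * z = (e * y) * z.

End Supertropical.

Record is_comm_semiring (U : Type) (add mul : U -> U -> U) (zero one : U) : Prop := {
  sr_addA : forall x y z, add x (add y z) = add (add x y) z;
  sr_addC : forall x y, add x y = add y x;
  sr_add0 : forall x, add zero x = x;
  sr_mulA : forall x y z, mul x (mul y z) = mul (mul x y) z;
  sr_mulC : forall x y, mul x y = mul y x;
  sr_mul1 : forall x, mul one x = x;
  sr_mul0 : forall x, mul zero x = zero;
  sr_mulDl : forall x y z, mul (add x y) z = add (mul x z) (mul y z);
  sr_mulDr : forall x y z, mul z (add x y) = add (mul z x) (mul z y)
}.

Definition is_supertropical_semiring (U : Type) (add mul : U -> U -> U) (zero one : U) : Prop :=
  let e := add one one in
  is_comm_semiring U add mul zero one /\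
  mul e e = e /\
  (forall x y, add (mul e x) (mul e y) = mul e x \/ add (mul e x) (mul e y) = mul e y) /\
  (forall x y, mul e x = mul e y -> add x y = mul e x) /\
  (forall x y, mul e x <> mul e y -> add x y = x \/ add x y = y).

(* Write [M = eU] for the ghost ideal.  The ghost of a sum is the maximum of the ghosts,
   so associativity and commutativity of the supertropical addition only use that the
   order on [M] is total.  Distributivity can fail only when [ex < ey] but [exz = eyz]:
   then [z(x + y) = zy] whereas [zx + zy = eyz], and (Dis) says precisely that these
   agree.  Conversely, instantiating right distributivity at such [x, y, z] yields (Dis).
   The supertropical axioms follow because [1 + 1 = e1 = e] and [0] is the least ghost. *)

From Stdlib Require Import Bool.

Section SupertropicalAddition.

Variables (U : Type) (mul : U -> U -> U) (one zero e : U) (le : U -> U -> bool).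
Hypothesis HU : comm_supertropical_monoid U mul one zero e le.

Local Notation "x * y" := (mul x y).
Local Notation "x + y" := (st_add U mul e le x y).

Lemma ghost_idem x : e * (e * x) = e * x.
Proof. now rewrite (mulA _ _ _ _ _ _ HU), (e_idem _ _ _ _ _ _ HU). Qed.

Lemma ghost_zero : e * zero = zero.
Proof. now rewrite (mulC _ _ _ _ _ _ HU), (mul0x _ _ _ _ _ _ HU). Qed.

Lemma ghost_le0_eq0 x : le (e * x) zero = true -> x = zero.
Proof.
  intros Hx0. apply (e_faithful _ _ _ _ _ _ HU).
  rewrite <- ghost_zero in Hx0 |- *. apply (le_antisym _ _ _ _ _ _ HU); [exact Hx0|].
  rewrite ghost_zero. apply (le0 _ _ _ _ _ _ HU).
Qed.

Lemma ghost_le_mull x y z :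
  le (e * x) (e * y) = true -> le (e * (z * x)) (e * (z * y)) = true.
Proof.
  intros Hxy.
  assert (Hghost : forall a, (e * a) * (e * z) = e * (z * a)).
  { intros a. rewrite <- (mulA _ _ _ _ _ _ HU), (mulC _ _ _ _ _ _ HU a (e * z)),
      <- (mulA _ _ _ _ _ _ HU). apply ghost_idem. }
  rewrite <- !Hghost. now apply (le_mul _ _ _ _ _ _ HU).
Qed.

Lemma ghost_st_add x y :
  e * (x + y) = if le (e * x) (e * y) then e * y else e * x.
Proof.
  unfold st_add.
  destruct (le (e * x) (e * y)) eqn:Hxy, (le (e * y) (e * x)) eqn:Hyx; auto.
  rewrite ghost_idem. now apply (le_antisym _ _ _ _ _ _ HU).
Qed.

Lemma st_addC x y : x + y = y + x.
Proof.
  unfold st_add.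
  destruct (le (e * x) (e * y)) eqn:Hxy, (le (e * y) (e * x)) eqn:Hyx; auto.
  - now apply (le_antisym _ _ _ _ _ _ HU).
  - pose proof (le_total _ _ _ _ _ _ HU x y) as Htot.
    now rewrite Hxy, Hyx in Htot.
Qed.

Lemma st_addA x y z : x + (y + z) = (x + y) + z.
Proof.
  pose proof (le_refl _ _ _ _ _ _ HU) as Hrefl.
  pose proof (le_antisym _ _ _ _ _ _ HU) as Hanti.
  pose proof (le_trans _ _ _ _ _ _ HU) as Htrans.
  pose proof (le_total _ _ _ _ _ _ HU) as Htot.
  pose proof (ghost_st_add y z) as Hyz_sum. pose proof (ghost_st_add x y) as Hxy_sum.
  set (yz := y + z) in *. set (xy := x + y) in *.
  unfold st_add at 1 2. rewrite Hyz_sum, Hxy_sum. subst yz xy.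
  destruct (le (e * x) (e * y)) eqn:Hxy, (le (e * y) (e * x)) eqn:Hyx,
           (le (e * y) (e * z)) eqn:Hyz, (le (e * z) (e * y)) eqn:Hzy,
           (le (e * x) (e * z)) eqn:Hxz, (le (e * z) (e * x)) eqn:Hzx;
  try match goal with
  | H1 : le (e * ?a) (e * ?b) = true, H2 : le (e * ?b) (e * ?c) = true,
    H3 : le (e * ?a) (e * ?c) = false |- _ => now rewrite (Htrans a b c H1 H2) in H3
  | H1 : le (e * ?a) (e * ?b) = false, H2 : le (e * ?b) (e * ?a) = false |- _ =>
      now specialize (Htot a b); rewrite H1, H2 in Htot
  end;
  unfold st_add;
  repeat (rewrite ?Hxy, ?Hyx, ?Hyz, ?Hzy, ?Hxz, ?Hzx, ?Hrefl, ?ghost_idem; cbv iota);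
  try reflexivity;
  repeat match goal with
  | H1 : le (e * ?a) (e * ?b) = true, H2 : le (e * ?b) (e * ?a) = true |- _ =>
      pose proof (Hanti a b H1 H2); clear H1 H2
  end; congruence.
Qed.

Lemma st_add0x x : zero + x = x.
Proof.
  unfold st_add. rewrite ghost_zero, (le0 _ _ _ _ _ _ HU).
  destruct (le (e * x) zero) eqn:Hx0; [|reflexivity].
  now rewrite (ghost_le0_eq0 x Hx0), ?ghost_zero.
Qed.

Lemma st_add_one_one : one + one = e.
Proof.
  unfold st_add. rewrite (le_refl _ _ _ _ _ _ HU), (mulC _ _ _ _ _ _ HU).
  apply (mul1x _ _ _ _ _ _ HU).
Qed.

(* A product with a ghost-zero factor is zero, so [Dis] also covers [ex = 0]. *)
Lemma Dis_ghost_product x y z :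
  Dis U mul zero e le ->
  le (e * x) (e * y) = true -> le (e * y) (e * x) = false ->
  e * (z * x) = e * (z * y) -> z * y = e * (z * y).
Proof.
  intros HDis Hxy Hyx Hghost.
  destruct (le (e * x) zero) eqn:Hx0.
  - rewrite (ghost_le0_eq0 x Hx0), (mulC _ _ _ _ _ _ HU z zero),
      (mul0x _ _ _ _ _ _ HU), ghost_zero in Hghost.
    assert (Hzy : z * y = zero) by (apply (e_faithful _ _ _ _ _ _ HU); auto).
    now rewrite Hzy, ghost_zero.
  - assert (Hyz : y * z = (e * y) * z).
    { apply (HDis x y z); unfold lt.
      - now rewrite Hx0, (le0 _ _ _ _ _ _ HU).
      - now rewrite Hxy, Hyx.
      - now rewrite <- !(mulA _ _ _ _ _ _ HU), (mulC _ _ _ _ _ _ HU x z),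
          (mulC _ _ _ _ _ _ HU y z). }
    now rewrite (mulC _ _ _ _ _ _ HU z y), (mulA _ _ _ _ _ _ HU e y z).
Qed.

Lemma st_mulDr_of_Dis x y z :
  Dis U mul zero e le -> z * (x + y) = (z * x) + (z * y).
Proof.
  intros HDis. unfold st_add.
  destruct (le (e * x) (e * y)) eqn:Hxy, (le (e * y) (e * x)) eqn:Hyx.
  - rewrite (ghost_le_mull _ _ z Hxy), (ghost_le_mull _ _ z Hyx).
    now rewrite (mulA _ _ _ _ _ _ HU), (mulC _ _ _ _ _ _ HU z e), <- (mulA _ _ _ _ _ _ HU).
  - rewrite (ghost_le_mull _ _ z Hxy).
    destruct (le (e * (z * y)) (e * (z * x))) eqn:Hzyx; [|reflexivity].
    assert (Hghost : e * (z * x) = e * (z * y))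
      by exact (le_antisym _ _ _ _ _ _ HU _ _ (ghost_le_mull _ _ z Hxy) Hzyx).
    rewrite Hghost. exact (Dis_ghost_product x y z HDis Hxy Hyx Hghost).
  - rewrite (ghost_le_mull _ _ z Hyx).
    destruct (le (e * (z * x)) (e * (z * y))) eqn:Hzxy; [|reflexivity].
    assert (Hghost : e * (z * y) = e * (z * x))
      by exact (le_antisym _ _ _ _ _ _ HU _ _ (ghost_le_mull _ _ z Hyx) Hzxy).
    exact (Dis_ghost_product y x z HDis Hyx Hxy Hghost).
  - pose proof (le_total _ _ _ _ _ _ HU x y) as Htot.
    now rewrite Hxy, Hyx in Htot.
Qed.

Lemma st_is_semiring_of_Dis : Dis U mul zero e le -> st_is_semiring U mul e le.
Proof.
  intros HDis. split; [exact st_addA | split; intros x y z].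
  - now apply st_mulDr_of_Dis.
  - rewrite !(mulC _ _ _ _ _ _ HU _ z). now apply st_mulDr_of_Dis.
Qed.

Lemma Dis_of_st_is_semiring : st_is_semiring U mul e le -> Dis U mul zero e le.
Proof.
  intros [_ [_ HmulDl]] x y z _ Hlt Hghost.
  unfold lt in Hlt. apply andb_prop in Hlt as [Hxy Hyx]. apply negb_true_iff in Hyx.
  specialize (HmulDl x y z). unfold st_add at 1 in HmulDl. rewrite Hxy, Hyx in HmulDl.
  rewrite HmulDl. unfold st_add.
  rewrite <- !(mulA _ _ _ _ _ _ HU) in Hghost.
  now rewrite Hghost, (le_refl _ _ _ _ _ _ HU), (mulA _ _ _ _ _ _ HU).
Qed.

Lemma st_supertropical_of_semiring :
  st_is_semiring U mul e le -> is_supertropical_semiring U (st_add U mul e le) mul zero one.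
Proof.
  intros [HaddA [HmulDr HmulDl]].
  unfold is_supertropical_semiring; cbv zeta. rewrite st_add_one_one.
  split; [|split; [exact (e_idem _ _ _ _ _ _ HU) | split; [|split]]].
  - constructor; auto using st_addC, st_add0x.
    all: apply HU.
  - intros x y. unfold st_add. rewrite !ghost_idem.
    destruct (le (e * x) (e * y)); [destruct (le (e * y) (e * x))|]; auto.
  - intros x y Hxy. unfold st_add. now rewrite Hxy, (le_refl _ _ _ _ _ _ HU).
  - intros x y Hxy. unfold st_add.
    destruct (le (e * x) (e * y)) eqn:H1, (le (e * y) (e * x)) eqn:H2; auto.
    exfalso. apply Hxy. now apply (le_antisym _ _ _ _ _ _ HU).
Qed.

End SupertropicalAddition.

Theorem theorem1p2 (U : Type) (mul : U -> U -> U) (one zero e : U)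
    (le : U -> U -> bool)
    (HU : comm_supertropical_monoid U mul one zero e le) :
  (st_is_semiring U mul e le <-> Dis U mul zero e le) /\
  (st_is_semiring U mul e le ->
     is_supertropical_semiring U (st_add U mul e le) mul zero one).
Proof.
  split; [split|].
  - exact (Dis_of_st_is_semiring U mul one zero e le HU).
  - exact (st_is_semiring_of_Dis U mul one zero e le HU).
  - exact (st_supertropical_of_semiring U mul one zero e le HU).
Qed.
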